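(* Let $G$ be a graph on $n$ vertices with at least two vertex-disjoint edges. If $k \ge \min\{n-1, \Gamma(G)+\gamma(G)\}$, then $D_k(G)$ is connected.
   Context: All graphs are finite and simple. A set $S \subseteq V(G)$ is a dominating set of $G$ if every vertex of $V(G)\setminus S$ is adjacent to a vertex of $S$; it is a minimal dominating set if no proper subset of it is a dominating set. $\gamma(G)$ is the minimum cardinality of a dominating set of $G$, and $\Gamma(G)$ is the maximum cardinality of a minimal dominating set of $G$. For an integer $k \ge \gamma(G)$, the $k$-dominating graph $D_k(G)$ is the graph whose vertices are the dominating sets of $G$ of cardinality at most $k$, with two such sets $A,B$ adjacent if and only if their symmetric difference $(A\setminus B)\cup(B\setminus A)$ consists of exactly one vertex of $G$. *)

From mathcomp Require Import all_boot.
Set Implicit Arguments. Unset Strict Implicit. Unset Printing Implicit Defensive.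

Definition simple_graph (T : finType) (e : rel T) : Prop :=
  symmetric e /\ irreflexive e.

Definition dominating (T : finType) (e : rel T) (S : {set T}) : bool :=
  [forall v, (v \notin S) ==> [exists u in S, e v u]].

Definition minimal_dominating (T : finType) (e : rel T) (S : {set T}) : bool :=
  dominating e S && [forall S' : {set T}, (S' \proper S) ==> ~~ dominating e S'].

(* gamma(G): minimum cardinality of a dominating set (setT always dominates). *)
Definition gamma (T : finType) (e : rel T) : nat :=
  \big[minn/#|T|]_(S : {set T} | dominating e S) #|S|.

Definition Gamma (T : finType) (e : rel T) : nat :=
  \max_(S : {set T} | minimal_dominating e S) #|S|.

Definition Dk_vertex (T : finType) (e : rel T) (k : nat) (A : {set T}) : bool :=
  dominating e A && (#|A| <= k).

Definition Dk_adj (T : finType) (e : rel T) (k : nat) : rel {set T} :=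
  fun A B => [&& Dk_vertex e k A, Dk_vertex e k B & #|(A :\: B) :|: (B :\: A)| == 1].

Definition Dk_connected (T : finType) (e : rel T) (k : nat) : Prop :=
  forall A B : {set T}, Dk_vertex e k A -> Dk_vertex e k B ->
    exists p : seq {set T}, path (Dk_adj e k) A p /\ last A p = B.

Definition two_disjoint_edges (T : finType) (e : rel T) : Prop :=
  exists a b c d : T, [/\ e a b, e c d & uniq [:: a; b; c; d]].

From mathcomp Require Import all_boot.

Set Implicit Arguments.
Unset Strict Implicit.
Unset Printing Implicit Defensive.

(* Everything rests on one observation: if A is dominating, A \subset B and
   #|B| <= k, then A and B are joined in D_k(G) by adding the vertices of
   B :\: A one at a time (every intermediate set is dominating, being a
   superset of A).  It therefore suffices to exhibit a "hub" that every
   vertex of D_k(G) reaches.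

   - If Gamma + gamma <= k, the hub is a minimum dominating set D: a vertex A
     shrinks to a minimal dominating A' \subset A, then A' grows to A' :|: D
     (of size <= Gamma + gamma) and shrinks back to D.
   - If n - 1 <= k, every vertex reaches a co-singleton [set~ u] with u not
     isolated, and two such co-singletons are joined through
     [set~ u] :&: [set~ v]; when u is a leaf hanging on v, the second
     disjoint edge provides an intermediate co-singleton [set~ x]. *)

Section DominatingGraph.

Variables (T : finType) (e : rel T) (k : nat).

Local Notation reach := (connect (Dk_adj e k)).

Lemma dominating_sup (A B : {set T}) :
  A \subset B -> dominating e A -> dominating e B.
Proof.
move=> sAB /forallP dA; apply/forallP => v; apply/implyP => vB.
have vA : v \notin A by apply: contra vB => /(subsetP sAB).
have /existsP [u /andP [uA evu]] := implyP (dA v) vA.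
by apply/existsP; exists u; rewrite (subsetP sAB).
Qed.

Lemma Dk_adj_sym : symmetric (Dk_adj e k).
Proof.
move=> A B; rewrite /Dk_adj setUC.
by case: (Dk_vertex e k A); case: (Dk_vertex e k B).
Qed.

Lemma reachC (A B : {set T}) : reach A B = reach B A.
Proof. exact: (sym_connect_sym Dk_adj_sym). Qed.

Lemma Dk_adj_setU1 (A : {set T}) (x : T) :
  x \notin A -> dominating e A -> #|x |: A| <= k -> Dk_adj e k A (x |: A).
Proof.
move=> xA dA cxA.
have dxA : dominating e (x |: A) by apply: dominating_sup dA; apply: subsetUr.
have cA : #|A| <= k by apply: leq_trans cxA; apply/subset_leq_card/subsetUr.
rewrite /Dk_adj /Dk_vertex dA dxA cA cxA /=.
have -> : (A :\: (x |: A)) :|: ((x |: A) :\: A) = [set x].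
  apply/setP => y; rewrite !inE.
  by case: (eqVneq y x) => [->|]; [rewrite (negPf xA) | case: (y \in A)].
by rewrite cards1.
Qed.

Lemma reach_sub (A B : {set T}) :
  A \subset B -> dominating e A -> #|B| <= k -> reach A B.
Proof.
move=> + + cB; have [n] := ubnP #|B :\: A|.
elim: n A => // n IH A ltBA sAB dA.
have [/eqP|[x xBA]] := set_0Vmem (B :\: A).
  rewrite setD_eq0 => sBA.
  by have -> : A = B by apply/eqP; rewrite eqEsubset sAB.
move: (xBA); rewrite inE => /andP [xA xB].
have sxAB : x |: A \subset B by rewrite subUset sub1set xB.
apply: connect_trans (connect1 (Dk_adj_setU1 xA dA _)) (IH _ _ sxAB _).
- exact: leq_trans (subset_leq_card sxAB) cB.
- rewrite -ltnS (leq_trans _ ltBA) // (cardsD1 x (B :\: A)) xBA ltnS.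
  by rewrite setDDl setUC.
- by apply: dominating_sup dA; apply: subsetUr.
Qed.

Lemma minimal_dominating_sub (A : {set T}) :
  dominating e A -> exists2 A' : {set T}, A' \subset A & minimal_dominating e A'.
Proof.
move=> dA.
have P0 : [pred S : {set T} | dominating e S && (S \subset A)] A.
  by rewrite /= dA subxx.
case: (arg_minnP (fun S : {set T} => #|S|) P0) => M /andP [dM sMA] minM.
exists M => //; rewrite /minimal_dominating dM /=.
apply/forallP => S; apply/implyP => pS; apply/negP => dS.
have := minM S; rewrite /= dS (subset_trans (proper_sub pS) sMA) => /(_ isT).
by rewrite leqNgt proper_card.
Qed.

Lemma gamma_witness : exists2 D : {set T}, dominating e D & #|D| <= gamma e.
Proof.
have dT : dominating e [set: T] by apply/forallP => v; rewrite inE.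
have [D dD minD] := arg_minnP (fun S : {set T} => #|S|) dT.
exists D => //; rewrite /gamma.
apply: (big_ind (fun m => #|D| <= m)) => // [|x y hx hy].
  exact: max_card.
by rewrite leq_min hx hy.
Qed.

Lemma minimal_dominating_le_Gamma (A : {set T}) :
  minimal_dominating e A -> #|A| <= Gamma e.
Proof. by move=> mA; apply: (leq_bigmax_cond (P := minimal_dominating e)). Qed.

Lemma reach_minimum_dominating (D A : {set T}) :
  dominating e D -> #|D| <= gamma e -> Gamma e + gamma e <= k ->
  Dk_vertex e k A -> reach A D.
Proof.
move=> dD cD hk /andP [dA cA].
have [A' sA'A mA'] := minimal_dominating_sub dA.
have dA' : dominating e A' by case/andP: mA'.
have cA'D : #|A' :|: D| <= k.
  apply: leq_trans hk; rewrite cardsU (leq_trans (leq_subr _ _)) //.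
  exact: leq_add (minimal_dominating_le_Gamma mA') cD.
apply: connect_trans (_ : reach A' D); first by rewrite reachC reach_sub.
apply: connect_trans (reach_sub (subsetUl A' D) dA' cA'D) _.
by rewrite reachC reach_sub // subsetUr.
Qed.

Lemma Dk_connected_hub (H : {set T}) :
  (forall A, Dk_vertex e k A -> reach A H) -> Dk_connected e k.
Proof.
move=> toH A B vA vB.
have : reach A B by apply: connect_trans (toH _ vA) _; rewrite reachC toH.
by case/connectP => p pA ->; exists p.
Qed.

Section CoSingletons.

(* In this section G is simple and k >= n - 1, so every co-singleton
   [set~ u] that dominates is a vertex of D_k(G). *)
Hypotheses (e_sym : symmetric e) (e_irr : irreflexive e) (hk : #|T|.-1 <= k).

Lemma edge_neq (u w : T) : e u w -> w != u.
Proof. by apply: contraTneq => ->; rewrite e_irr. Qed.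

Lemma dominating_setC1 (u w : T) : e u w -> dominating e [set~ u].
Proof.
move=> euw; apply/forallP => x; apply/implyP; rewrite !inE negbK => /eqP ->.
by apply/existsP; exists w; rewrite !inE edge_neq.
Qed.

Lemma reach_setC1_nonisolated (a b : T) (A : {set T}) :
  e a b -> Dk_vertex e k A -> exists u w, e u w /\ reach A [set~ u].
Proof.
move=> eab /andP [dA cA].
have [AT|[u]] := set_0Vmem (~: A).
  exists a, b; split => //; rewrite reachC reach_sub ?(dominating_setC1 eab) //.
  by rewrite -setCS AT sub0set.
rewrite inE => uA.
have /existsP [w /andP [wA euw]] := implyP (forallP dA u) uA.
exists u, w; split => //; rewrite reach_sub ?cardsC1 //.
by apply/subsetP => x xA; rewrite !inE; apply: contraTneq xA => ->.
Qed.

(* Co-singletons of u and v are joined through [set~ u] :&: [set~ v] when u has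
   a neighbour other than v and v a neighbour other than u. *)
Lemma reach_setC1_two_neighbours (u v u' v' : T) :
  e u u' -> u' != v -> e v v' -> v' != u -> reach [set~ u] [set~ v].
Proof.
move=> euu' u'v evv' v'u.
have dS : dominating e ([set~ u] :&: [set~ v]).
  apply/forallP => x; apply/implyP; rewrite !inE negb_and !negbK.
  case/orP => /eqP ->; apply/existsP; [exists u' | exists v'].
    by rewrite !inE (edge_neq euu') u'v.
  by rewrite !inE (edge_neq evv') v'u.
apply: connect_trans (_ : reach ([set~ u] :&: [set~ v]) _).
  by rewrite reachC reach_sub ?subsetIl ?cardsC1.
by rewrite reach_sub ?subsetIr ?cardsC1.
Qed.

Lemma edge_avoiding_leaf (u v : T) :
  two_disjoint_edges e -> (forall w, e u w -> w = v) ->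
  exists x y, [/\ e x y, x != u, x != v, y != u & y != v].
Proof.
move=> [a [b [c [d [eab ecd abcd]]]]] leaf.
have meets_v x y : e x y -> ~~ [&& x != u, x != v, y != u & y != v] ->
    (x == v) || (y == v).
  move=> exy; case: (eqVneq x u) => [xu _|_ /=]; first by rewrite (leaf y) ?eqxx ?orbT // -xu.
  case: (eqVneq y u) => [yu _|_ /=]; first by rewrite (leaf x) ?eqxx // -yu e_sym.
  by rewrite negb_and !negbK.
have [abv|] := boolP [&& a != u, a != v, b != u & b != v].
  by exists a, b; case/and4P: abv.
move/(meets_v _ _ eab) => vab.
have [cdv|] := boolP [&& c != u, c != v, d != u & d != v].
  by exists c, d; case/and4P: cdv.
move/(meets_v _ _ ecd) => vcd; move: abcd.
by case/orP: vab => /eqP->; case/orP: vcd => /eqP->; rewrite /= !inE !eqxx ?orbT ?andbF.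
Qed.

(* A leaf u hanging on v: pass through the co-singleton of a vertex x of an edge
   avoiding u and v. *)
Lemma reach_setC1_leaf (u v : T) :
  two_disjoint_edges e -> e u v -> (forall w, e u w -> w = v) ->
  reach [set~ u] [set~ v].
Proof.
move=> tde euv leaf.
have [x [y [exy xu xv yu yv]]] := edge_avoiding_leaf tde leaf.
apply: connect_trans (_ : reach [set~ x] _).
  by apply: (@reach_setC1_two_neighbours u x v y) => //; rewrite eq_sym.
by apply: (@reach_setC1_two_neighbours x v y u) => //; rewrite 1?e_sym // eq_sym.
Qed.

Lemma reach_setC1 (u v u' v' : T) :
  two_disjoint_edges e -> e u u' -> e v v' -> reach [set~ u] [set~ v].
Proof.
move=> tde euu' evv'.
have [/existsP [u1 /andP [eu1 u1v]]|/existsPn leaf_u] :=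
  boolP [exists w, e u w && (w != v)]; last first.
  have leaf w : e u w -> w = v by move: (leaf_u w) => /nandP [/negbTE->|/negbNE/eqP].
  by apply: reach_setC1_leaf => //; rewrite -(leaf _ euu').
have [/existsP [v1 /andP [ev1 v1u]]|/existsPn leaf_v] :=
  boolP [exists w, e v w && (w != u)].
  exact: (@reach_setC1_two_neighbours u v u1 v1).
have leaf w : e v w -> w = u by move: (leaf_v w) => /nandP [/negbTE->|/negbNE/eqP].
by rewrite reachC; apply: reach_setC1_leaf => //; rewrite -(leaf _ evv').
Qed.

End CoSingletons.

End DominatingGraph.

Theorem theorem5 (T : finType) (e : rel T) (k : nat) :
  simple_graph e ->
  two_disjoint_edges e ->
  gamma e <= k ->
  minn (#|T|).-1 (Gamma e + gamma e) <= k ->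
  Dk_connected e k.
Proof.
move=> [e_sym e_irr] tde _; rewrite geq_min => /orP [hn|hG].
-
  have [a [b [_ [_ [eab _ _]]]]] := tde.
  apply: (@Dk_connected_hub _ _ _ [set~ a]) => A vA.
  have [u [w [euw reachAu]]] := reach_setC1_nonisolated e_irr hn eab vA.
  exact: connect_trans reachAu (reach_setC1 e_sym e_irr hn tde euw eab).
-
  have [D dD cD] := gamma_witness e.
  exact: Dk_connected_hub (fun A => reach_minimum_dominating dD cD hG).
Qed.
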